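(* Let $R$ be an associative ring with identity and involution $*$, and let $a\in R^{\#}\cap R^{\dagger}$. Then $a\in R^{SEP}$ if and only if $aa^*a^{\dagger}a^{\dagger}a^2\in PE(R)$.
   Context: An involution on $R$ is a map $x\mapsto x^*$ with $(x^* )^*=x$, $(x+y)^*=x^*+y^*$, $(xy)^*=y^*x^*$. An element $a$ is Moore–Penrose invertible if there is $b$ with $aba=a$, $bab=b$, $(ab)^*=ab$, $(ba)^*=ba$; such $b$ is unique, denoted $a^{\dagger}$, and $R^{\dagger}$ is the set of such $a$. An element $a$ is group invertible if there is $b$ with $aba=a$, $bab=b$, $ab=ba$; such $b$ is unique, denoted $a^{\#}$, and $R^{\#}$ is the set of such $a$. $PE(R)=\{e\in R: e^2=e=e^*\}$ is the set of projections. For $a\in R^{\#}\cap R^{\dagger}$, $a$ is SEP if $a^*=a^{\dagger}=a^{\#}$; $R^{SEP}$ denotes the set of SEP elements. *)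

From mathcomp Require Import all_boot all_algebra.
Set Implicit Arguments. Unset Strict Implicit. Unset Printing Implicit Defensive.
Import GRing.Theory.
Local Open Scope ring_scope.

Definition is_involution (R : pzRingType) (inv : R -> R) : Prop :=
  [/\ forall x, inv (inv x) = x,
      forall x y, inv (x + y) = inv x + inv y &
      forall x y, inv (x * y) = inv y * inv x].

Definition is_MP_inverse (R : pzRingType) (star : R -> R) (a b : R) : Prop :=
  [/\ a * b * a = a, b * a * b = b,
      star (a * b) = a * b & star (b * a) = b * a].

Definition is_group_inverse (R : pzRingType) (a b : R) : Prop :=
  [/\ a * b * a = a, b * a * b = b & a * b = b * a].

Definition is_projection (R : pzRingType) (star : R -> R) (e : R) : Prop :=
  e * e = e /\ star e = e.

Definition is_SEP (R : pzRingType) (star : R -> R) (a adag asharp : R) : Prop :=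
  star a = adag /\ adag = asharp.

From mathcomp Require Import all_boot all_algebra.
Set Implicit Arguments. Unset Strict Implicit. Unset Printing Implicit Defensive.
Import GRing.Theory.
Local Open Scope ring_scope.

(* Writing a^† = b and a^# = g, the element e = a a^* b b a^2 collapses to
   the projection a b when a^* = b = g.  Conversely, since a b e = e and
   e = e^*, also e a b = e, i.e. a a^* b b (a^3 b - a^2) = 0.  Left
   multiplication by a a^* b b is injective on aR: the kernels of a a^*, a^*
   and b coincide, b R = a^* R, and a^* has index one because it has the
   group inverse g^*.  Hence a^2 b = a, so g a = a b; this forces a b = b a
   and b = g.  Now e = a a^*, and e^2 = e gives a a^* a = a, whence a^* = b. *)

Section GroupInverse.

Variables (R : pzRingType) (a g : R).
Hypothesis ga : is_group_inverse a g.

Lemma group_inverse_mulKr : g * (a * a) = a.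
Proof. by case: ga => aga _ ag_ga; rewrite mulrA -ag_ga. Qed.

Lemma group_inverse_unique h : is_group_inverse a h -> h = g.
Proof.
case: (ga) => _ gag ag_ga [aha hah ah_ha].
have ga_ha : g * a = h * a.
  by rewrite -[X in g * X]aha -mulrA -ah_ha !mulrA -(mulrA g) group_inverse_mulKr.
by rewrite -gag ga_ha -mulrA ag_ga ga_ha -ah_ha mulrA hah.
Qed.

Lemma group_inverse_mul_sq_eq0 x : a * (a * x) = 0 -> a * x = 0.
Proof. by move=> aax0; rewrite -{1}group_inverse_mulKr -!mulrA aax0 mulr0. Qed.

End GroupInverse.

Section Involution.

Variables (R : pzRingType) (star : R -> R).
Hypotheses (starK : involutive star)
           (starM : forall x y, star (x * y) = star y * star x).

Lemma group_inverse_star a g :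
  is_group_inverse a g -> is_group_inverse (star a) (star g).
Proof.
by case=> aga gag ag_ga; split; rewrite -!starM ?mulrA ?aga ?gag // ag_ga.
Qed.

Section MoorePenrose.

Variables (a b : R).
Hypothesis mp : is_MP_inverse star a b.

Lemma mp_projection : is_projection star (a * b).
Proof. by case: mp => aba _ ab_sym _; rewrite /is_projection mulrA aba. Qed.

Lemma mulr_star_mp : star a * (a * b) = star a.
Proof. by case: mp => aba _ ab_sym _; rewrite -ab_sym -starM aba. Qed.

Lemma mulr_mp_star : b * (a * star a) = star a.
Proof. by case: mp => aba _ _ ba_sym; rewrite mulrA -ba_sym -starM mulrA aba. Qed.

Lemma mp_range_star : star a * (star b * b) = b.
Proof.
by case: mp => _ bab _ ba_sym; rewrite mulrA -starM ba_sym bab.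
Qed.

Lemma mp_ker_star x : (b * x = 0) <-> (star a * x = 0).
Proof.
case: mp => _ bab ab_sym _; split=> x0.
  by rewrite -mulr_star_mp -!mulrA x0 !mulr0.
by rewrite -bab -(mulrA b a) -ab_sym starM mulrA -mulrA x0 mulr0.
Qed.

Lemma mp_partial_isometry : a * star a * a = a -> star a = b.
Proof.
case: mp => _ bab _ _ isom.
have ab_E : a * b = a * star a by rewrite -{1}isom -!mulrA mulr_star_mp.
by rewrite -bab -mulrA ab_E mulr_mp_star.
Qed.

Local Notation e := (a * star a * b * b * a ^+ 2).

Lemma projection_e_mulr_mp : is_projection star e -> e * (a * b) = e.
Proof.
case: mp => aba _ ab_sym _ [_ e_sym].
have ab_e : a * b * e = e by rewrite !mulrA aba.
by rewrite -{1}e_sym -ab_sym -starM ab_e e_sym.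
Qed.

Variable g : R.
Hypothesis ga : is_group_inverse a g.

Lemma mp_mul_sq_eq0 w : b * (b * w) = 0 -> b * w = 0.
Proof.
have bw_E : b * w = star a * (star b * b * w) by rewrite mulrA mp_range_star.
move/mp_ker_star; rewrite bw_E.
exact: (group_inverse_mul_sq_eq0 (group_inverse_star ga)).
Qed.

Lemma mp_group_cancel x : a * star a * b * b * (a * x) = 0 -> a * x = 0.
Proof.
case: mp => aba _ _ _; rewrite -!mulrA.
have ker_aastar w : a * (star a * w) = 0 -> b * w = 0.
  by move=> aw0; apply/mp_ker_star; rewrite -mulr_mp_star -!mulrA aw0 mulr0.
move/ker_aastar/mp_mul_sq_eq0/mp_mul_sq_eq0 => bax0.
by rewrite -aba -!mulrA bax0 mulr0.
Qed.

Lemma mp_group_EP : g * a = a * b -> b = g.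
Proof.
case: mp => aba bab ab_sym ba_sym; case: (ga) => aga _ _ ga_ab.
have ab_ba : a * b = b * a.
  have ab_abba : a * b * (b * a) = a * b.
    by rewrite -{1}ga_ab -mulrA (mulrA a) aba ga_ab.
  have ba_baab : b * a * (a * b) = b * a.
    by rewrite -ga_ab -mulrA (mulrA a) aga.
  by rewrite -ab_sym -ab_abba starM ab_sym ba_sym ba_baab.
by apply: (group_inverse_unique ga); split.
Qed.

Lemma SEP_eE : is_SEP star a b g -> e = a * b.
Proof.
case: (ga) => _ gag ag_ga [-> bg].
have baa : b * (a * a) = a by rewrite bg group_inverse_mulKr.
have bba : b * (b * a) = b by rewrite bg -ag_ga mulrA gag.
by rewrite expr2 -!mulrA baa bba.
Qed.

Lemma projection_EP : is_projection star e -> b = g.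
Proof.
move/projection_e_mulr_mp; rewrite expr2 => ep.
have : a * star a * b * b * (a * (a * (a * b - 1))) = 0.
  by apply/eqP; rewrite !mulrBr !mulr1 subr_eq0 -ep !mulrA.
move/mp_group_cancel/(group_inverse_mul_sq_eq0 ga)/eqP.
rewrite mulrBr mulr1 subr_eq0 mulrA => /eqP aab.
by apply: mp_group_EP; rewrite -{1}aab mulrA group_inverse_mulKr.
Qed.

Lemma projection_SEP : is_projection star e -> is_SEP star a b g.
Proof.
move=> pe; have bg := projection_EP pe.
have ab_ba : a * b = b * a by case: ga => _ _ ag_ga; rewrite bg.
have e_E : e = a * star a.
  by rewrite expr2 -!mulrA bg (group_inverse_mulKr ga) -bg -ab_ba mulr_star_mp.
case: pe; rewrite e_E => ee _.
have : star a * (a * star a) = star a.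
  by rewrite -{1}mulr_mp_star -mulrA ee mulr_mp_star.
move/(congr1 star); rewrite !starM starK => isom.
by split; first exact: mp_partial_isometry.
Qed.

End MoorePenrose.
End Involution.

Theorem theorem2p3 (R : pzRingType) (star : R -> R) (a adag asharp : R) :
  is_involution star ->
  is_MP_inverse star a adag ->
  is_group_inverse a asharp ->
  (is_SEP star a adag asharp <->
   is_projection star (a * star a * adag * adag * (a ^+ 2))).
Proof.
move=> [starK _ starM] mp ga; split=> [sep | pe].
  by rewrite (SEP_eE ga sep); exact: mp_projection.
exact: projection_SEP.
Qed.
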